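(* (a) For every $e\in E$ there exist $i,c,d\in\mathbb{Z}$ with $c,d\geq0$ such that $e=c\epsilon^i+d\epsilon^{i+1}$. (b) Every $e\in E$ is represented over $\mathcal{O}_K$ by the 8-ary form $x_1^2+x_2^2+x_3^2+x_4^2+\epsilon(x_5^2+x_6^2+x_7^2+x_8^2)$, i.e., $e$ equals this form evaluated at some $x_1,\dots,x_8\in\mathcal{O}_K$.
   Context: $D>1$ squarefree, $K=\mathbb{Q}(\sqrt D)$, $\mathcal{O}_K$ its ring of integers. $\epsilon$ is the totally positive fundamental unit of $\mathcal{O}_K$ (the smallest unit $>1$ whose conjugate is also positive; it has norm $1$). $E=\mathbb{N}_0[\epsilon,\epsilon^{-1}]$ is the set of all finite sums $\sum_{i=i_0}^{i_1}e_i\epsilon^i$ with $i_0,i_1\in\mathbb{Z}$ and integers $e_i\geq0$. *)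

(* K = Q(sqrt D) is realized inside an arbitrary real closed field R. *)
From HB Require Import structures.
From mathcomp Require Import all_boot all_order all_algebra.
Set Implicit Arguments. Unset Strict Implicit. Unset Printing Implicit Defensive.
Import Order.TTheory GRing.Theory Num.Theory.
Local Open Scope ring_scope.

Definition squarefree (D : nat) : Prop :=
  forall p : nat, prime p -> ~~ (p ^ 2 %| D)%N.

Definition sqD (R : rcfType) (D : nat) : R := Num.sqrt (D%:R).

Definition omegaK (R : rcfType) (D : nat) : R :=
  if (D %% 4 == 1)%N then (1 + sqD R D) / 2 else sqD R D.

Definition inOK (R : rcfType) (D : nat) (x : R) : Prop :=
  exists a b : int, x = a%:~R + b%:~R * omegaK R D.

Definition unitOK (R : rcfType) (D : nat) (x : R) : Prop :=
  x != 0 /\ inOK D x /\ inOK D x^-1.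

(* totally positive: x > 0 and its Galois conjugate a - b sqrt D > 0,
   where x = a + b sqrt D with a, b rational (unique since sqrt D irrational) *)
Definition totpos (R : rcfType) (D : nat) (x : R) : Prop :=
  0 < x /\ exists a b : rat,
    x = ratr a + ratr b * sqD R D /\ 0 < ratr a - ratr b * sqD R D.

Definition tp_fund_unit (R : rcfType) (D : nat) (eps : R) : Prop :=
  [/\ unitOK D eps, totpos D eps, 1 < eps &
      forall u : R, unitOK D u -> totpos D u -> 1 < u -> eps <= u].

(* E = N_0[eps, eps^-1]: finite sums sum_{k} e_k eps^(i0 + k) with e_k in N *)
Definition in_Eeps (R : rcfType) (eps : R) (x : R) : Prop :=
  exists (i0 : int) (s : seq nat),
    x = \sum_(k < size s) (nth 0%N s k)%:R * eps ^ (i0 + (k : nat)%:Z).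

From mathcomp Require Import all_boot all_order all_algebra.
From mathcomp Require Import zify ring lra.
Set Implicit Arguments.
Unset Strict Implicit.
Unset Printing Implicit Defensive.
Import Order.TTheory GRing.Theory Num.Theory.
Local Open Scope ring_scope.

(* Since eps is a totally positive unit, its norm is 1 and its Galois conjugate is
   eps^-1; hence t = eps + eps^-1 is an integer and every power of eps lies in
   Z + Z eps.  An element x = sum_k e_k eps^(a+k) of E has conjugate
   x' = sum_k e_k eps^-(a+k), and x / x' lies in some [eps^(2i), eps^(2i+2)].  Then
   u = x eps^-i = p + q eps and its conjugate u' = p + q eps^-1 satisfy
   u' <= u <= eps^2 u', and the identities u - u' = q (eps - eps^-1) and
   eps u' - eps^-1 u = p (eps - eps^-1) force p, q >= 0: this is (a).
   For (b), write c and d as sums of four squares (Lagrange's theorem, proved by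
   Euler's descent) and regroup c eps^i + d eps^(i+1), according to the parity of i,
   as c eps^(2m) + eps (d eps^(2m)) or d eps^(2m+2) + eps (c eps^(2m)). *)

Definition sum4sq (n : int) : Prop :=
  exists a b c d : int, n = a ^+ 2 + b ^+ 2 + c ^+ 2 + d ^+ 2.

Lemma sum4sqM m n : sum4sq m -> sum4sq n -> sum4sq (m * n).
Proof.
move=> [a [b [c [d ->]]]] [a' [b' [c' [d' ->]]]].
exists (a * a' + b * b' + c * c' + d * d'), (a * b' - b * a' + c * d' - d * c'),
  (a * c' - b * d' - c * a' + d * b'), (a * d' + b * c' - c * b' - d * a').
ring.
Qed.

Lemma sqr_add_sqr_double (a b : int) : (2 %| a - b)%Z ->
  exists u v : int, a ^+ 2 + b ^+ 2 = 2 * (u ^+ 2 + v ^+ 2).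
Proof.
move=> /dvdzP[k Ek]; exists (b + k), k.
have -> : a = b + k * 2 by rewrite -Ek; ring.
ring.
Qed.

Lemma dvd2_sqr_sub (x : int) : (2 %| x ^+ 2 - x)%Z.
Proof.
have -> : x ^+ 2 - x = x * (x - 1) by ring.
have [/dvdz_mulr -> //|x_odd] := boolP (2 %| x)%Z.
by apply: dvdz_mull; lia.
Qed.

Lemma sum4sq_half k : sum4sq (2 * k) -> sum4sq k.
Proof.
have pair_up a b c d : (2 %| a - b)%Z -> (2 %| c - d)%Z ->
    2 * k = a ^+ 2 + b ^+ 2 + c ^+ 2 + d ^+ 2 -> sum4sq k.
  move=> /sqr_add_sqr_double[u [v Eab]] /sqr_add_sqr_double[w [z Ecd]] Ek.
  exists u, v, w, z; apply: (mulfI (_ : 2 != 0)) => //.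
  by rewrite Ek -addrA Eab Ecd; ring.
move=> [a [b [c [d Ek]]]].
have even_sum : (2 %| a + b + c + d)%Z.
  move: (dvd2_sqr_sub a) (dvd2_sqr_sub b) (dvd2_sqr_sub c) (dvd2_sqr_sub d) Ek.
  move: (a ^+ 2) (b ^+ 2) (c ^+ 2) (d ^+ 2) => A B C D; lia.
have [ab|ab] := boolP (2 %| a - b)%Z; first by apply: (pair_up a b c d) => //; lia.
have [ac|ac] := boolP (2 %| a - c)%Z.
  by apply: (pair_up a c b d) => //; [lia | rewrite Ek; ring].
by apply: (pair_up a d b c); [lia | lia | rewrite Ek; ring].
Qed.

Lemma centered_residue (a h : int) : 0 <= h ->
  exists A q : int, a = A + (2 * h + 1) * q /\ `|A| <= h.
Proof.
by move=> h_ge0; exists (((a + h) %% (2 * h + 1))%Z - h), ((a + h) %/ (2 * h + 1))%Z; lia.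
Qed.

Lemma sum4sq_descent (m p : int) : 1 < m -> ~~ (2 %| m)%Z -> ~~ (m %| p)%Z ->
  sum4sq (m * p) -> exists2 r, 0 < r < m & sum4sq (r * p).
Proof.
move=> m_gt1 m_odd m_ndvd_p [a [b [c [d Ep]]]].
have m_gt0 : 0 < m by lia.
have [h [Em h_ge0]] : exists h, m = 2 * h + 1 /\ 0 <= h.
  by exists ((m - 1) %/ 2)%Z; lia.
have [A [al [Ea bA]]] := centered_residue a h_ge0.
have [B [be [Eb bB]]] := centered_residue b h_ge0.
have [C [ga [Ec bC]]] := centered_residue c h_ge0.
have [D [de [Ed bD]]] := centered_residue d h_ge0.
rewrite -Em in Ea Eb Ec Ed; subst a b c d.
set r := p - (2 * (A * al + B * be + C * ga + D * de)
              + m * (al ^+ 2 + be ^+ 2 + ga ^+ 2 + de ^+ 2)).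
have Er : m * r = A ^+ 2 + B ^+ 2 + C ^+ 2 + D ^+ 2 by rewrite /r mulrBr Ep; ring.
clearbody r.
have r_neq0 : r != 0.
  apply: contraNneq m_ndvd_p => r0; apply/dvdzP.
  exists (al ^+ 2 + be ^+ 2 + ga ^+ 2 + de ^+ 2); apply: (mulfI (lt0r_neq0 m_gt0)).
  have : A ^+ 2 + B ^+ 2 + C ^+ 2 + D ^+ 2 == 0 by rewrite -Er r0 mulr0.
  rewrite !paddr_eq0 ?addr_ge0 ?sqr_ge0 // !sqrf_eq0.
  move=> /andP[/andP[/andP[/eqP A0 /eqP B0] /eqP C0] /eqP D0].
  by rewrite Ep A0 B0 C0 D0; ring.
have r_ge0 : 0 <= r by rewrite -(pmulr_rge0 _ m_gt0) Er !addr_ge0 ?sqr_ge0.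
have r_lt_m : r < m.
  have sqr_le (X : int) : `|X| <= h -> X ^+ 2 <= h ^+ 2.
    by move=> Xh; rewrite -real_normK ?num_real // lerXn2r ?nnegrE ?(le_trans _ Xh).
  rewrite -(ltr_pM2l m_gt0) Er (le_lt_trans (_ : _ <= 4 * h ^+ 2)) //.
    by rewrite (_ : 4 * h ^+ 2 = h ^+ 2 + h ^+ 2 + h ^+ 2 + h ^+ 2) ?lerD ?sqr_le //; ring.
  by rewrite Em; clear -h_ge0; nia.
exists r; first by rewrite lt_def r_neq0 r_ge0.
(* Euler's identity for (a, b, c, d) and (A, B, C, D): as a = A mod m, etc., all
   four of its terms are multiples of m. *)
set Y := r + A * al + B * be + C * ga + D * de.
have EY : m * Y =
    (A + m * al) * A + (B + m * be) * B + (C + m * ga) * C + (D + m * de) * D.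
  by rewrite /Y !mulrDr Er; ring.
clearbody Y.
exists Y, (al * B - be * A + ga * D - de * C),
  (al * C - be * D - ga * A + de * B), (al * D + be * C - ga * B - de * A).
apply: (mulfI (_ : m * m != 0)); first by rewrite mulf_neq0 ?gt_eqF.
have -> : m * m * (r * p) = (m * p) * (m * r) by ring.
rewrite Ep Er !mulrDr (_ : m * m * Y ^+ 2 = (m * Y) ^+ 2); last by ring.
by rewrite EY; ring.
Qed.

Lemma sum4sq_prime_multiple (p n : nat) : prime p -> (0 < n < p)%N ->
  sum4sq (n%:Z * p%:Z) -> sum4sq p%:Z.
Proof.
move=> p_pr; elim/ltn_ind: n => n IH /andP[n_gt0 n_lt_p] Hnp.
have [n1|n_neq1] := eqVneq n 1%N; first by rewrite n1 mul1r in Hnp.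
have [n_even|n_odd] := boolP (2 %| n)%N.
  apply: (IH n./2); [lia | lia | apply: sum4sq_half].
  by rewrite mulrA -PoszM (_ : 2 * n./2 = n)%N //; lia.
have n_ndvd_p : ~~ (n%:Z %| p%:Z)%Z.
  by apply/negP => /(prime_nt_dvdP p_pr n_neq1); lia.
have n_gt1 : 1 < n%:Z by lia.
have [r /andP[r_gt0 r_lt_n] Hrp] := sum4sq_descent n_gt1 n_odd n_ndvd_p Hnp.
have [r' Er] : exists r' : nat, r = r' by exists `|r|%N; lia.
by subst r; apply: (IH r') => //; lia.
Qed.

Lemma Fp_sqr_inj (p x y : nat) : prime p -> (x <= p./2)%N -> (y <= p./2)%N ->
  x%:R ^+ 2 = y%:R ^+ 2 :> 'F_p -> x = y.
Proof.
move=> p_pr; wlog xy : x y / (x <= y)%N => [wlog x_le y_le E|x_le y_le E].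
  by case/orP: (leq_total x y) => ?; [|apply/esym]; apply: wlog.
apply/eqP; apply: contraT => x_neq_y.
have : (p %| (y - x) * (y + x))%N.
  rewrite (dvdn_pcharf (pchar_Fp p_pr)) natrM natrB // natrD.
  by rewrite -subr_sqr E subrr.
by rewrite Euclid_dvdM // => /orP[] /dvdn_leq; lia.
Qed.

Lemma prime_dvd_sqr_add_sqr_add1 (p : nat) : prime p -> odd p ->
  exists x y : nat, [/\ x <= p./2, y <= p./2 & p %| x ^ 2 + y ^ 2 + 1]%N.
Proof.
move=> p_pr p_odd; set h := p./2.
have ord_le (z : 'I_h.+1) : (z <= h)%N by rewrite -ltnS.
(* The h + 1 values x^2 and the h + 1 values -1 - y^2 cannot all be distinct in
   'F_p, while distinct x <= h have distinct squares. *)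
pose f (z : 'I_h.+1 + 'I_h.+1) : 'F_p :=
  match z with inl x => (x : nat)%:R ^+ 2 | inr y => -1 - (y : nat)%:R ^+ 2 end.
have : ~~ injectiveb f.
  apply/negP => /injectiveP/leq_card.
  by rewrite (card_Fp p_pr) card_sum card_ord; lia.
have witness (x y : 'I_h.+1) : (x : nat)%:R ^+ 2 = -1 - (y : nat)%:R ^+ 2 :> 'F_p ->
    exists x y : nat, [/\ x <= h, y <= h & p %| x ^ 2 + y ^ 2 + 1]%N.
  move=> E; exists x, y; split; rewrite ?ord_le //.
  by rewrite (dvdn_pcharf (pchar_Fp p_pr)) !natrD !natrX E; apply/eqP; ring.
case/injectivePn => [[x|x] [[y|y] xy /= E]].
- case/negP: xy; apply/eqP; congr inl.
  exact/val_inj/(Fp_sqr_inj p_pr (ord_le x) (ord_le y)).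
- exact: witness E.
- exact: witness (esym E).
- case/negP: xy; apply/eqP; congr inr.
  apply/val_inj/(Fp_sqr_inj p_pr (ord_le x) (ord_le y)).
  by apply: oppr_inj; apply: (addrI (-1)).
Qed.

Lemma sum4sq_prime (p : nat) : prime p -> sum4sq p%:Z.
Proof.
move=> p_pr; have [->|p_odd] := even_prime p_pr; first by exists 1, 1, 0, 0.
have [x [y [xh yh /dvdnP[m Em]]]] := prime_dvd_sqr_add_sqr_add1 p_pr p_odd.
have p_gt0 := prime_gt0 p_pr.
have m_range : (0 < m < p)%N.
  apply/andP; split; first by rewrite lt0n; apply/eqP => m0; move: Em; rewrite m0 addn1.
  rewrite -(ltn_pmul2r p_gt0) -Em (leq_ltn_trans (_ : _ <= 2 * p./2 ^ 2 + 1)%N) //.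
    by rewrite mul2n -addnn leq_add2r leq_add // leq_exp2r.
  have Ep : p = (2 * p./2 + 1)%N by rewrite -{1}(odd_double_half p) p_odd -mul2n addnC.
  move: p./2 Ep (odd_prime_gt2 p_odd p_pr) => h -> h_gt0.
  by rewrite expnS expn1; nia.
apply: (sum4sq_prime_multiple p_pr m_range).
exists x%:Z, y%:Z, 1, 0.
by rewrite -PoszM -Em; nia.
Qed.

Lemma sum4sq_nat (n : nat) : sum4sq n%:Z.
Proof.
elim/ltn_ind: n => n IH.
have [n_le1|n_gt1] := leqP n 1.
  by case: n n_le1 {IH} => [|[|]] // _; [exists 0, 0, 0, 0 | exists 1, 0, 0, 0].
have -> : n = (pdiv n * (n %/ pdiv n))%N by rewrite mulnC divnK // pdiv_dvd.
rewrite PoszM; apply: sum4sqM; first exact/sum4sq_prime/pdiv_prime.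
by apply: IH; rewrite ltn_Pdiv ?prime_gt1 ?pdiv_prime //; lia.
Qed.

Lemma rat_sqr_nat (w : rat) (n : nat) :
  w ^+ 2 = n%:R -> exists k : nat, n = (k ^ 2)%N.
Proof.
move=> Ew.
have Eint : numq w ^+ 2 = n%:Z * denq w ^+ 2.
  apply: (@intr_inj rat); rewrite rmorphXn rmorphM rmorphXn /= numqE exprMn Ew.
  by rewrite pmulrn.
have Enat : (`|numq w| ^ 2 = n * `|denq w| ^ 2)%N by rewrite -!abszX Eint abszM.
have den1 : `|denq w|%N = 1%N.
  have cop : coprime (`|denq w| ^ 2) (`|numq w| ^ 2).
    by rewrite coprimeXl // coprimeXr // coprime_sym coprime_num_den.
  have /coprime_dvdr/(_ cop) : (`|denq w| ^ 2 %| `|numq w| ^ 2)%N.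
    by rewrite Enat dvdn_mull.
  by rewrite /coprime gcdnn => /eqP; nia.
by exists `|numq w|%N; rewrite Enat den1 muln1.
Qed.

Lemma squarefree_nonsquare (D : nat) : (1 < D)%N -> squarefree D ->
  forall k : nat, D <> (k ^ 2)%N.
Proof.
move=> D_gt1 sqf k ED; have k_gt1 : (1 < k)%N by rewrite ED in D_gt1; nia.
by have := sqf _ (pdiv_prime k_gt1); rewrite ED dvdn_exp2r ?pdiv_dvd.
Qed.

Definition qnorm (D : nat) (u v : rat) : rat := u ^+ 2 - D%:R * v ^+ 2.

Lemma qnormM (D : nat) (u v u' v' : rat) :
  qnorm D (u * u' + D%:R * v * v') (u * v' + u' * v) = qnorm D u v * qnorm D u' v'.
Proof. by rewrite /qnorm; ring. Qed.

Section QuadraticCoordinates.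

Variables (R : rcfType) (D : nat).

Local Notation sqrtD := (sqD R D).
Local Notation qcoord u v := (ratr u + ratr v * sqrtD).

Lemma sqD_sqr : sqrtD ^+ 2 = D%:R.
Proof. by rewrite sqr_sqrtr // ler0n. Qed.

Lemma qcoordM (u v u' v' : rat) :
  qcoord u v * qcoord u' v' = qcoord (u * u' + D%:R * v * v') (u * v' + u' * v).
Proof. by rewrite !rmorphD !rmorphM /= rmorph_nat -sqD_sqr; ring. Qed.

Lemma qcoord_conj (u v : rat) :
  qcoord u v * (ratr u - ratr v * sqrtD) = ratr (qnorm D u v).
Proof. by rewrite /qnorm rmorphB !rmorphXn rmorphM /= rmorph_nat -sqD_sqr; ring. Qed.

Lemma inOK_qcoord (x : R) : inOK D x -> exists u v : rat,
  [/\ x = qcoord u v, exists t : int, 2 * u = t%:~R & exists n : int, qnorm D u v = n%:~R].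
Proof.
move=> [a [b ->]]; rewrite /omegaK /qnorm; case: ifP => [/eqP D_mod4 | _].
  have ED : D%:R = 4 * (D %/ 4)%:R + 1 :> rat.
    by rewrite {1}(divn_eq D 4) D_mod4 natrD natrM mulrC.
  exists (a%:~R + b%:~R / 2), (b%:~R / 2); split.
  - by rewrite !rmorphD !rmorphM /= !fmorphV /= !ratr_int rmorph_nat; field.
  - by exists (2 * a + b); rewrite rmorphD rmorphM /=; field.
  - exists (a ^+ 2 + a * b - (D %/ 4)%:Z * b ^+ 2).
    by rewrite ED !(rmorphB, rmorphD, rmorphM, rmorphXn) /= -pmulrn; field.
exists a%:~R, b%:~R; split.
- by rewrite !ratr_int.
- by exists (2 * a); rewrite rmorphM.
- by exists (a ^+ 2 - D%:Z * b ^+ 2); rewrite rmorphB !rmorphXn rmorphM rmorphXn.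
Qed.

Hypothesis D_nonsquare : forall k : nat, D <> (k ^ 2)%N.

Lemma qcoord_eq0 (u v : rat) : qcoord u v = 0 -> u = 0 /\ v = 0.
Proof.
move=> E; suff v0 : v = 0.
  by move: E; rewrite v0 rmorph0 mul0r addr0 => /eqP; rewrite fmorph_eq0 => /eqP.
apply/eqP; apply: contraT => v_neq0; exfalso.
have Es : sqrtD = ratr (- u / v).
  have Evs : - ratr u = ratr v * sqrtD by apply/eqP; rewrite eq_sym -addr_eq0 addrC E.
  by rewrite fmorph_div rmorphN /= Evs mulrC mulKf // fmorph_eq0.
have [k Dk] : exists k : nat, D = (k ^ 2)%N.
  apply: (@rat_sqr_nat (- u / v)); apply: (fmorph_inj (@ratr R)).
  by rewrite rmorphXn /= -Es sqD_sqr rmorph_nat.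
exact: D_nonsquare Dk.
Qed.

Lemma qcoord_inj (u v u' v' : rat) : qcoord u v = qcoord u' v' -> u = u' /\ v = v'.
Proof.
move=> E; have /qcoord_eq0[] : qcoord (u - u') (v - v') = 0.
  by rewrite !rmorphB /= mulrBl addrACA -opprD E subrr.
by move=> /subr0_eq -> /subr0_eq ->.
Qed.

Lemma totpos_unit_trace (eps : R) : unitOK D eps -> totpos D eps ->
  exists t : int, eps + eps^-1 = t%:~R.
Proof.
move=> [eps_neq0 [eps_OK epsV_OK]] [eps_gt0 [r [q [Eeps conj_gt0]]]].
have [u [v [Ee [t Et] [n En]]]] := inOK_qcoord eps_OK.
have [u' [v' [Ee' _ [n' En']]]] := inOK_qcoord epsV_OK.
have [ru qv] := qcoord_inj (etrans (esym Eeps) Ee); subst r q.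
have [E1 E0] : u * u' + D%:R * v * v' = 1 /\ u * v' + u' * v = 0.
  by apply: qcoord_inj; rewrite -qcoordM -Ee -Ee' mulfV // rmorph1 rmorph0 mul0r addr0.
have nn' : n * n' = 1.
  apply: (@intr_inj rat); rewrite rmorphM /= -En -En' -qnormM E1 E0.
  by rewrite /qnorm expr1n expr0n mulr0 subr0.
have n_gt0 : 0 < n.
  have : 0 < ratr (qnorm D u v) :> R by rewrite -qcoord_conj -Ee mulr_gt0.
  by rewrite En ratr_int ltr0z.
have n1 : n = 1 by case: (lerP n' 0) => ?; nia.
have epsV : eps^-1 = ratr u - ratr v * sqrtD.
  by apply: (mulfI eps_neq0); rewrite mulfV // Ee qcoord_conj En n1 rmorph1.
exists t; rewrite epsV {1}Ee -ratr_int -Et rmorphM /= rmorph_nat; ring.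
Qed.

End QuadraticCoordinates.

Lemma int_bracket (R : realDomainType) (f : int -> R) (x : R) (a b : int) :
  a < b -> f a <= x -> x <= f b -> exists i : int, f i <= x <= f (i + 1).
Proof.
move=> ab; have [n ->] : exists n : nat, b = a + n.+1%:Z.
  by exists (absz (b - a - 1)%R); lia.
elim: n a {ab} => [|n IH] a lo hi; first by exists a; rewrite lo.
have [le_x|lt_x] := lerP x (f (a + 1)); first by exists a; rewrite lo le_x.
apply: (IH (a + 1)); first exact: ltW.
by rewrite (_ : a + 1 + n.+1%:Z = a + n.+2%:Z) //; lia.
Qed.

Lemma mulr_int_lin (F : fieldType) (w : F) (t p q p' q' : int) :
  w != 0 -> w + w^-1 = t%:~R ->
  (p%:~R + q%:~R * w) * (p'%:~R + q'%:~R * w) =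
  (p * p' - q * q')%:~R + (p * q' + p' * q + q * q' * t)%:~R * w.
Proof.
move=> w_neq0 w_trace.
have w_sqr : w * w = t%:~R * w - 1 by rewrite -w_trace mulrDl mulVf //; ring.
rewrite !(rmorphD, rmorphB, rmorphM) /=.
transitivity (p%:~R * p'%:~R + (p%:~R * q'%:~R + p'%:~R * q%:~R) * w
  + q%:~R * q'%:~R * (w * w) : F); first ring.
by rewrite w_sqr; ring.
Qed.

Section UnitConjugation.

Variables (R : realFieldType) (e : R) (t : int).
Hypotheses (e_gt1 : 1 < e) (e_trace : e + e^-1 = t%:~R).

(* y is the image of x under the conjugation e |-> e^-1 of Z[e] = Z + Z e. *)
Definition conj_pair (x y : R) : Prop :=
  exists p q : int, x = p%:~R + q%:~R * e /\ y = p%:~R + q%:~R * e^-1.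

Let e_gt0 : 0 < e. Proof. exact: lt_trans e_gt1. Qed.
Let e_neq0 : e != 0. Proof. by rewrite gt_eqF. Qed.

Lemma conj_pairD x y x' y' :
  conj_pair x y -> conj_pair x' y' -> conj_pair (x + x') (y + y').
Proof.
move=> [p [q [-> ->]]] [p' [q' [-> ->]]]; exists (p + p'), (q + q').
by rewrite !rmorphD /=; split; ring.
Qed.

Lemma conj_pairM x y x' y' :
  conj_pair x y -> conj_pair x' y' -> conj_pair (x * x') (y * y').
Proof.
move=> [p [q [-> ->]]] [p' [q' [-> ->]]].
have eV_trace : e^-1 + e^-1^-1 = t%:~R by rewrite invrK addrC.
exists (p * p' - q * q'), (p * q' + p' * q + q * q' * t).
by split; apply: mulr_int_lin; rewrite ?invr_eq0.
Qed.

Lemma conj_pair_nat (n : nat) : conj_pair n%:R n%:R.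
Proof. by exists n%:Z, 0; split; rewrite mul0r addr0 -pmulrn. Qed.

Lemma conj_pairX x y (n : nat) : conj_pair x y -> conj_pair (x ^+ n) (y ^+ n).
Proof.
move=> Pxy; elim: n => [|n IH]; first by rewrite !expr0; apply: (conj_pair_nat 1).
by rewrite !exprS; apply: conj_pairM.
Qed.

Lemma conj_pair_expz (k : int) : conj_pair (e ^ k) (e ^ (- k)).
Proof.
have P1 : conj_pair e e^-1 by exists 0, 1; rewrite !mul1r !add0r.
have P2 : conj_pair e^-1 e.
  exists t, (-1); rewrite !mulN1r -e_trace.
  by split; ring.
case: k => n; first by rewrite -exprnN -exprVn; apply: conj_pairX.
by rewrite NegzE opprK -exprnN -exprVn; apply: conj_pairX.
Qed.

Lemma expz_int_lin (k : int) : exists p q : int, e ^ k = p%:~R + q%:~R * e.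
Proof. by have [p [q [Ek _]]] := conj_pair_expz k; exists p, q. Qed.

Lemma conj_pair_ge0 u v : conj_pair u v -> v <= u -> u <= e ^+ 2 * v ->
  exists c d : nat, u = c%:R + d%:R * e.
Proof.
move=> [p [q [Eu Ev]]] vu uv.
have gap_gt0 : 0 < e - e^-1.
  by rewrite subr_gt0 (lt_trans _ e_gt1) // invf_lt1.
have q_ge0 : 0 <= q.
  rewrite -(ler0z R) -(pmulr_lge0 _ gap_gt0).
  by rewrite (_ : _ * _ = u - v) ?subr_ge0 // Eu Ev; ring.
have p_ge0 : 0 <= p.
  rewrite -(ler0z R) -(pmulr_lge0 _ gap_gt0).
  rewrite (_ : _ * _ = e * v - e^-1 * u); last first.
    by rewrite Eu Ev; field.
  by rewrite subr_ge0 -(ler_pM2l e_gt0) mulrA mulfV // mul1r mulrA -expr2.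
exists `|p|%N, `|q|%N.
by rewrite !natr_absz !ger0_norm.
Qed.

End UnitConjugation.

Section PositiveSums.

Variables (R : rcfType) (e : R) (t : int).
Hypotheses (e_gt1 : 1 < e) (e_trace : e + e^-1 = t%:~R).

Let e_gt0 : 0 < e. Proof. exact: lt_trans e_gt1. Qed.
Let e_neq0 : e != 0. Proof. by rewrite gt_eqF. Qed.

Lemma in_Eeps_conj_bracket x : in_Eeps e x -> exists y, conj_pair e x y /\
  exists i : int, e ^ (i + i) * y <= x <= e ^ (i + 1 + (i + 1)) * y.
Proof.
move=> [a [s ->]].
set y := \sum_(k < size s) (nth 0%N s k)%:R * e ^ (- (a + (k : nat)%:Z)).
exists y; split.
  apply: (big_ind2 (conj_pair e)); [exact: conj_pair_nat 0 | exact: conj_pairD |].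
  move=> k _; apply: (conj_pairM e_gt1 e_trace); first exact: conj_pair_nat.
  exact: (conj_pair_expz e_gt1 e_trace).
apply: (@int_bracket _ (fun i => e ^ (i + i) * y) _ a (a + (size s).+1%:Z)).
- lia.
- rewrite mulr_sumr; apply: ler_sum => k _; rewrite mulrCA -expfzDr //.
  by apply: ler_wpM2l => //; apply: ler_weXz2l; [exact: ltW | lia].
- rewrite mulr_sumr; apply: ler_sum => k _; rewrite mulrCA -expfzDr //.
  by apply: ler_wpM2l => //; apply: ler_weXz2l; [exact: ltW | have := ltn_ord k; lia].
Qed.

Lemma in_Eeps_two_terms x : in_Eeps e x ->
  exists (i : int) (c d : nat), x = c%:R * e ^ i + d%:R * e ^ (i + 1).
Proof.
move=> /in_Eeps_conj_bracket[y [Pxy [i /andP[lo hi]]]].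
have ei_gt0 : 0 < e ^ i by rewrite exprz_gt0.
have Pe := conj_pair_expz e_gt1 e_trace (- i); rewrite opprK in Pe.
have [c [d Eu]] : exists c d : nat, x * e ^ (- i) = c%:R + d%:R * e.
  apply: (conj_pair_ge0 e_gt1 (conj_pairM e_gt1 e_trace Pxy Pe)).
  - by rewrite -invr_expz ler_pdivlMr // -mulrA -expfzDr // mulrC.
  - rewrite -invr_expz ler_pdivrMr // (le_trans hi) //.
    by rewrite !expfzDr // expr1z le_eqVlt; apply/orP; left; apply/eqP; ring.
exists i, c, d.
have -> : x = x * e ^ (- i) * e ^ i by rewrite -invr_expz mulfVK // gt_eqF.
by rewrite Eu expfzDr // expr1z; ring.
Qed.

End PositiveSums.

Lemma inOK_int_lin (R : rcfType) (D : nat) (x : R) (p q : int) :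
  inOK D x -> inOK D (p%:~R + q%:~R * x).
Proof.
move=> [a [b ->]]; exists (p + q * a), (q * b).
by rewrite !rmorphD !rmorphM /=; ring.
Qed.

Definition sum4sqOK (R : rcfType) (D : nat) (x : R) : Prop :=
  exists x1 x2 x3 x4 : R, (inOK D x1 /\ inOK D x2 /\ inOK D x3 /\ inOK D x4) /\
    x = x1 ^+ 2 + x2 ^+ 2 + x3 ^+ 2 + x4 ^+ 2.

Lemma sum4sqOK_nat_expz (R : rcfType) (D : nat) (e : R) (t : int) :
  1 < e -> e + e^-1 = t%:~R -> inOK D e ->
  forall (n : nat) (k : int), sum4sqOK D (n%:R * e ^ (k + k)).
Proof.
move=> e_gt1 e_trace e_OK n k.
have [p [q Ek]] := expz_int_lin e_gt1 e_trace k.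
have OK_scale (a : int) : inOK D (a%:~R * e ^ k).
  rewrite Ek mulrDr mulrA -!intrM; exact: inOK_int_lin.
have [a1 [a2 [a3 [a4 En]]]] := sum4sq_nat n.
exists (a1%:~R * e ^ k), (a2%:~R * e ^ k), (a3%:~R * e ^ k), (a4%:~R * e ^ k).
split; first by do !split; apply: OK_scale.
have e_neq0 : e != 0 by rewrite gt_eqF ?(lt_trans _ e_gt1).
by rewrite -[n%:R]/((n%:Z)%:~R) En !(rmorphD, rmorphXn) /= expfzDr //; ring.
Qed.

Theorem lemma9 (R : rcfType) (D : nat) (eps : R) :
  (1 < D)%N -> squarefree D -> tp_fund_unit D eps ->
  (forall e : R, in_Eeps eps e ->
     exists (i : int) (c d : nat), e = c%:R * eps ^ i + d%:R * eps ^ (i + 1))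
  /\
  (forall e : R, in_Eeps eps e ->
     exists x1 x2 x3 x4 x5 x6 x7 x8 : R,
       (inOK D x1 /\ inOK D x2 /\ inOK D x3 /\ inOK D x4 /\
        inOK D x5 /\ inOK D x6 /\ inOK D x7 /\ inOK D x8) /\
       e = x1 ^+ 2 + x2 ^+ 2 + x3 ^+ 2 + x4 ^+ 2
           + eps * (x5 ^+ 2 + x6 ^+ 2 + x7 ^+ 2 + x8 ^+ 2)).
Proof.
move=> D_gt1 D_sqf [eps_unit eps_totpos eps_gt1 _].
have [t eps_trace] :=
  totpos_unit_trace (squarefree_nonsquare D_gt1 D_sqf) eps_unit eps_totpos.
have two_terms := in_Eeps_two_terms eps_gt1 eps_trace.
split=> [|e /two_terms[i [c [d ->]]]]; first exact: two_terms.
have eps_neq0 : eps != 0 by rewrite gt_eqF ?(lt_trans _ eps_gt1).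
have [c' [d' [k [k' ->]]]] : exists (c' d' : nat) (k k' : int),
    c%:R * eps ^ i + d%:R * eps ^ (i + 1) =
    c'%:R * eps ^ (k + k) + eps * (d'%:R * eps ^ (k' + k')).
  have [m [->|->]] : exists m : int, i = m + m \/ i = m + m + 1 by exists (i %/ 2)%Z; lia.
    by exists c, d, m, m; rewrite !expfzDr // expr1z; ring.
  by exists d, c, (m + 1), m; rewrite !expfzDr // expr1z; ring.
have [eps_OK _] := eps_unit.2.
have sum4sq_eps := sum4sqOK_nat_expz eps_gt1 eps_trace eps_OK.
have [x1 [x2 [x3 [x4 [[O1 [O2 [O3 O4]]] ->]]]]] := sum4sq_eps c' k.
have [x5 [x6 [x7 [x8 [[O5 [O6 [O7 O8]]] ->]]]]] := sum4sq_eps d' k'.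
by exists x1, x2, x3, x4, x5, x6, x7, x8.
Qed.
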